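(* Let $q\geq 2$, let $A\in\mathbb{R}_{\geq0}^{q\times q}$, let $V$ be the value of the one-shot two-person zero-sum game defined by $A$, and let $0<\varepsilon\leq V$ be a constant. Let $\mathrm{ALG}$ be an algorithm (possibly randomized, with advice) for the repeated matrix game with cost matrix $A$. If $\mathbb{E}[\mathrm{ALG}(\sigma)]\leq (V-\varepsilon)n$ for every input $\sigma$ of length $n$, then $\mathrm{ALG}$ must read at least $$b\geq \frac{\varepsilon^2}{2\ln(2)\cdot\|A\|_\infty^2}\,n=\Omega(n)$$ bits of advice.
   Context: The one-shot game defined by $A$: a row player chooses $x\in[q]=\{1,\dots,q\}$, a column player chooses $y\in[q]$ simultaneously, and the column player pays $A(x,y)$ to the row player; its value $V$ is $\max_\mu\min_\nu\mathbb{E}_{x\sim\mu,y\sim\nu}A(x,y)$ over mixed strategies. $\|A\|_\infty=\max_{x,y}A(x,y)$. The repeated matrix game (RMG) with cost matrix $A$ is the online problem with inputs $\sigma=(n,x_1,\dots,x_n)$, $x_i\in[q]$; in round $i$ ($1\le i\le n$) the algorithm learns $n$ (if $i=1$) or $x_{i-1}$ (if $i>1$), then answers $y_i\in[q]$ as a function of $n,x_1,\dots,x_{i-1}$ (and its advice/randomness); the cost is $\sum_{i=1}^nA(x_i,y_i)$. Here $n$ (the number of characters) is called the length of the input. Algorithms with advice read bits from an infinite advice tape prepared by an oracle knowing the whole input; a randomized algorithm with advice is a probability distribution over deterministic algorithms with advice. *)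

From HB Require Import structures.
From mathcomp Require Import all_boot all_order all_algebra.
From mathcomp Require Import all_classical all_reals all_analysis.
Set Implicit Arguments. Unset Strict Implicit. Unset Printing Implicit Defensive.
Import Order.TTheory GRing.Theory Num.Theory.
Local Open Scope classical_set_scope.
Local Open Scope ring_scope.

Section Game.
Variables (R : realType) (q : nat).

(* mixed strategies on the action set 'I_q (= [q] shifted to 0..q-1) *)
Definition mixed_strategy : set ('I_q -> R) :=
  [set mu | (forall i, 0 <= mu i) /\ \sum_(i < q) mu i = 1].

Definition payoff (A : 'M[R]_q) (mu nu : 'I_q -> R) : R :=
  \sum_(x < q) \sum_(y < q) mu x * nu y * A x y.

Definition game_value (A : 'M[R]_q) : R :=
  sup [set inf [set payoff A mu nu | nu in mixed_strategy] | mu in mixed_strategy].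

(* ||A||_inf = max_{x,y} A(x,y)  (entries are nonnegative in the theorem) *)
Definition mat_maxnorm (A : 'M[R]_q) : R :=
  \big[Num.max/0]_(x < q) \big[Num.max/0]_(y < q) A x y.

(* A deterministic online algorithm with advice for the RMG: in round i
   (0-indexed) it answers as a function of n, the prefix x_0..x_{i-1}
   and the (infinite) advice tape. *)
Definition det_alg_adv := nat -> seq 'I_q -> (nat -> bool) -> 'I_q.

Definition rmg_cost (A : 'M[R]_q) (alg : det_alg_adv) (n : nat)
    (xs : n.-tuple 'I_q) (t : nat -> bool) : R :=
  \sum_(i < n) A (tnth xs i) (alg n (take i xs) t).

(* On input xs with tape t the algorithm reads at most the first b bits:
   its answers do not change when any bit beyond position b is changed. *)
Definition reads_at_most (alg : det_alg_adv) (n : nat) (xs : n.-tuple 'I_q)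
    (t : nat -> bool) (b : nat) : Prop :=
  forall t' : nat -> bool, (forall j, (j < b)%N -> t' j = t j) ->
  forall i, (i < n)%N -> alg n (take i xs) t' = alg n (take i xs) t.

End Game.

From HB Require Import structures.
From mathcomp Require Import all_boot all_order all_algebra.
From mathcomp Require Import all_classical all_reals all_analysis.
From mathcomp Require Import measurable_realfun.
From mathcomp Require Import ring lra.

(* Fix a row strategy [mu] that is nearly optimal in the one-shot game and draw
   the input i.i.d. from [mu].  A deterministic algorithm reading [b] advice
   bits is a choice, depending on the input, among [2^b] advice-free online
   strategies.  For each of them Hoeffding's lemma, applied round by round,
   bounds the exponential moment [E exp (- lam cost)] by
   [exp (n (- lam V + lam^2 ||A||^2 / 2))]; by Jensen's inequality, choosing the
   best strategy for each input gains at most [ln 2^b = b ln 2] in the exponent.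
   Averaging over the randomness of the algorithm and comparing with the
   assumed expected cost [(V - eps) n], the choice [lam = eps / ||A||^2] gives
   [b ln 2 >= n eps^2 / (2 ||A||^2)]. *)

Set Implicit Arguments.
Unset Strict Implicit.
Unset Printing Implicit Defensive.

Import Order.TTheory GRing.Theory Num.Theory numFieldNormedType.Exports.
Local Open Scope classical_set_scope.
Local Open Scope ring_scope.

Lemma expR_ge1DxDsqr (R : realType) (x : R) :
  0 <= x -> 1 + x + x ^+ 2 / 2 <= expR x.
Proof.
move=> x_ge0; rewrite /expR.
pose f (i : nat) := x ^+ i / i`!%:R *+ (i < 3)%N.
have F m : (2 < m)%N -> \sum_(0 <= i < m) f i = 1 + x + x ^+ 2 / 2.
  move=> m2; rewrite (@big_cat_nat _ _ _ 3) //= [X in _ + X]big_nat_cond.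
  rewrite [X in _ + X]big1 ?addr0; last first.
    by move=> i /andP[/andP[i3 _] _]; rewrite /f ltnNge i3 mulr0n.
  by rewrite !big_nat_recr //= big_nil /f /= add0r expr0 expr1 !mulr1n !divr1.
rewrite [leLHS](_ : _ = limn (@series R f)); last first.
  by apply/esym/(@lim_near_cst R^o) => //; near=> k; apply: F; near: k.
apply: ler_lim; first by apply: is_cvg_near_cst; near=> k; apply: F; near: k.
  exact: is_cvg_series_exp_coeff.
near=> k; apply: ler_sum => i _; rewrite /f /exp_coeff /=.
by case: (i < 3)%N; rewrite ?mulr1n ?mulr0n // divr_ge0 // exprn_ge0.
Unshelve. all: by end_near. Qed.

Lemma expRN_le1BxDsqr (R : realType) (x : R) :
  0 <= x -> expR (- x) <= 1 - x + x ^+ 2 / 2.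
Proof.
move=> x_ge0; have := expR_ge1DxDsqr x_ge0; set e := 1 + x + _ => ge_e.
have e_gt0 : 0 < e by rewrite /e; nra.
rewrite expRN (le_trans (_ : _ <= e^-1)) ?lef_pV2 ?posrE ?expR_gt0 //.
rewrite -[X in X <= _]mul1r ler_pdivrMr //.
have -> : (1 - x + x ^+ 2 / 2) * e = 1 + x ^+ 4 / 4 by rewrite /e; field.
by rewrite lerDl divr_ge0 // exprn_ge0.
Qed.

Section ProbabilityVector.
Variables (R : realType) (I : finType) (p : I -> R).
Hypotheses (p_ge0 : forall i, 0 <= p i) (p_sum1 : \sum_i p i = 1).

Lemma hoeffding_expR (a : I -> R) (M lam : R) :
  (forall i, 0 <= a i <= M) -> 0 <= lam ->
  \sum_i p i * expR (- (lam * a i)) <=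
    expR (- (lam * \sum_i p i * a i) + lam ^+ 2 * M ^+ 2 / 2).
Proof.
move=> a_bnd lam_ge0.
apply: le_trans (expR_ge1Dx _).
have -> : 1 + (- (lam * \sum_i p i * a i) + lam ^+ 2 * M ^+ 2 / 2) =
    \sum_i (p i * (1 + lam ^+ 2 * M ^+ 2 / 2) - lam * (p i * a i)).
  by rewrite sumrB -mulr_suml -mulr_sumr p_sum1; ring.
apply: ler_sum => i _; have /andP[ai_ge0 aiM] := a_bnd i.
have sqr_le : (lam * a i) ^+ 2 <= lam ^+ 2 * M ^+ 2.
  by rewrite exprMn ler_wpM2l ?exprn_ge0 // ler_sqr ?nnegrE //; lra.
have := expRN_le1BxDsqr (mulr_ge0 lam_ge0 ai_ge0).
have := p_ge0 i; nra.
Qed.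

Lemma wsum_gt0 (Y : I -> R) : (forall i, 0 < Y i) -> 0 < \sum_i p i * Y i.
Proof.
move=> Y_gt0; have pY_ge0 i : 0 <= p i * Y i by rewrite mulr_ge0 ?p_ge0 ?ltW.
rewrite lt_def sumr_ge0 // andbT; apply/eqP.
move=> /(psumr_eq0P (fun i _ => pY_ge0 i)) pY0.
have : \sum_i p i = 0.
  apply: big1 => i _; have /eqP := pY0 i isT.
  by rewrite mulf_eq0 (gt_eqF (Y_gt0 i)) orbF => /eqP.
by rewrite p_sum1 => /eqP; rewrite oner_eq0.
Qed.

Lemma wsum_ln_le_ln_wsum (Y : I -> R) : (forall i, 0 < Y i) ->
  \sum_i p i * ln (Y i) <= ln (\sum_i p i * Y i).
Proof.
move=> Y_gt0; have K_gt0 := wsum_gt0 Y_gt0; set K := \sum_i _ * _ in K_gt0 *.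
have tangent i : ln (Y i) <= ln K + (Y i / K - 1).
  rewrite -lerBlDl -ln_div ?posrE // -[X in ln X](addrNK 1) addrC.
  by apply: le_ln1Dx; rewrite ltrBrDl subrr divr_gt0.
apply: (@le_trans _ _ (\sum_i p i * (ln K + (Y i / K - 1)))).
  by apply: ler_sum => i _; rewrite ler_wpM2l.
under eq_bigr do rewrite mulrDr mulrBr mulr1 mulrA.
rewrite big_split sumrB /= -!mulr_suml -/K p_sum1 mulfV ?gt_eqF //.
by rewrite mul1r subrr addr0.
Qed.

End ProbabilityVector.

Section TupleSums.
Variable I : finType.

Lemma sum_tupleS (V : nmodType) m (F : m.+1.-tuple I -> V) :
  \sum_(t : m.+1.-tuple I) F t = \sum_x \sum_(t : m.-tuple I) F [tuple of x :: t].
Proof.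
rewrite pair_big /=.
rewrite (reindex (fun p : I * m.-tuple I => [tuple of p.1 :: p.2])) //.
apply: onW_bij; exists (fun t => (thead t, [tuple of behead t])).
  by case=> x t /=; rewrite theadE; congr pair; apply: val_inj.
by move=> t /=; rewrite [RHS]tuple_eta; apply: val_inj.
Qed.

Lemma sum_prod_tuple (R : comPzSemiRingType) (mu : I -> R) m :
  \sum_(t : m.-tuple I) \prod_(i < m) mu (tnth t i) = (\sum_x mu x) ^+ m.
Proof.
elim: m => [|m IH].
  by under eq_bigr do rewrite big_ord0; rewrite sumr_const card_tuple expn0.
rewrite sum_tupleS exprS mulr_suml; apply: eq_bigr => x _.
under eq_bigr do rewrite big_ord_recl tnth0.
rewrite -mulr_sumr.
by under eq_bigr do under eq_bigr do rewrite tnthS; rewrite IH.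
Qed.

Lemma sum_prod_adaptive_le (R : numDomainType) (w : seq I -> I -> R) (B : R) m :
  0 <= B -> (forall s x, 0 <= w s x) -> (forall s, \sum_x w s x <= B) ->
  \sum_(t : m.-tuple I) \prod_(i < m) w (take i t) (tnth t i) <= B ^+ m.
Proof.
move=> B_ge0; elim: m w => [|m IH] w w_ge0 w_le.
  by under eq_bigr do rewrite big_ord0; rewrite sumr_const card_tuple expn0.
rewrite sum_tupleS exprS.
under eq_bigr do under eq_bigr do rewrite big_ord_recl tnth0 /=.
under eq_bigr do under eq_bigr do under eq_bigr do rewrite tnthS.
under eq_bigr do rewrite -mulr_sumr.
apply: (@le_trans _ _ (\sum_x w [::] x * B ^+ m)).
  apply: ler_sum => x _; rewrite ler_wpM2l //.
  exact: (IH (fun s => w (x :: s))).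
by rewrite -mulr_suml ler_wpM2r ?exprn_ge0.
Qed.

End TupleSums.

(* Selecting, for each input, the best of [#|S|] candidate strategies gains at
   most [ln #|S|] in the exponent: this is where the advice bits are paid for. *)
Lemma selected_cost_mean_ge (R : realType) (X S : finType) (p : X -> R)
    (C : S -> X -> R) (g : X -> S) (lam B : R) :
  (forall x, 0 <= p x) -> \sum_x p x = 1 ->
  (forall s, \sum_x p x * expR (- (lam * C s x)) <= B) ->
  - (lam * \sum_x p x * C (g x) x) <= ln (#|S|%:R * B).
Proof.
move=> p_ge0 p_sum1 C_le.
pose Y x := \sum_s expR (- (lam * C s x)).
have Y_ge x : expR (- (lam * C (g x) x)) <= Y x.
  by rewrite /Y (bigD1 (g x)) //= lerDl sumr_ge0 // => s _; apply: expR_ge0.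
have Y_gt0 x : 0 < Y x := lt_le_trans (expR_gt0 _) (Y_ge x).
have EY_le : \sum_x p x * Y x <= #|S|%:R * B.
  under eq_bigr do rewrite mulr_sumr; rewrite exchange_big /=.
  apply: le_trans (ler_sum _ (fun s _ => C_le s)) _.
  by rewrite sumr_const mulr_natl.
apply: (@le_trans _ _ (\sum_x p x * ln (Y x))).
  rewrite mulr_sumr -sumrN; apply: ler_sum => x _.
  rewrite mulrCA -mulrN ler_wpM2l // -ler_expR lnK ?posrE //.
apply: le_trans (wsum_ln_le_ln_wsum p_ge0 p_sum1 Y_gt0) _.
by rewrite ler_ln ?posrE // (lt_le_trans (wsum_gt0 p_ge0 p_sum1 Y_gt0)).
Qed.

Definition tape_of (b : nat) (s : {ffun 'I_b -> bool}) : nat -> bool :=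
  fun j => if insub j is Some k then s k else false.

Definition tape_prefix (b : nat) (t : nat -> bool) : {ffun 'I_b -> bool} :=
  [ffun k : 'I_b => t k].

Lemma tape_of_prefix b (t : nat -> bool) j : (j < b)%N ->
  tape_of (tape_prefix b t) j = t j.
Proof. by rewrite /tape_of => jb; rewrite insubT ffunE. Qed.

Lemma rmg_cost_tape_prefix (R : realType) q (A : 'M[R]_q) (alg : det_alg_adv q)
    n (xs : n.-tuple 'I_q) (t : nat -> bool) b :
  reads_at_most alg xs t b ->
  rmg_cost A alg xs t = rmg_cost A alg xs (tape_of (tape_prefix b t)).
Proof.
move=> reads; apply: eq_bigr => i _; congr (A _ _).
by rewrite (reads _ (@tape_of_prefix b t)).
Qed.

Section DeterministicAlgorithm.
Variables (R : realType) (q : nat) (A : 'M[R]_q) (mu : 'I_q -> R).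
Hypotheses (mu_ge0 : forall x, 0 <= mu x) (mu_sum1 : \sum_x mu x = 1).
Variables (lam c : R).
Hypothesis mu_expR_le : forall y, \sum_x mu x * expR (- (lam * A x y)) <= expR c.

Lemma rmg_cost_expR_le (alg : nat -> seq 'I_q -> 'I_q) n :
  \sum_(xs : n.-tuple 'I_q) (\prod_(i < n) mu (tnth xs i)) *
     expR (- (lam * \sum_(i < n) A (tnth xs i) (alg n (take i xs))))
  <= expR c ^+ n.
Proof.
under eq_bigr do rewrite mulr_sumr -sumrN expR_sum -big_split /=.
apply: (sum_prod_adaptive_le
         (w := fun l x => mu x * expR (- (lam * A x (alg n l)))))
  (expR_ge0 c) _ _ => [s x|s].
  by rewrite mulr_ge0 ?expR_ge0.
exact: mu_expR_le.
Qed.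

Lemma det_advice_mean_cost_ge (alg : det_alg_adv q)
    (adv : seq 'I_q -> nat -> bool) n b : (forall xs : n.-tuple 'I_q, reads_at_most alg xs (adv xs) b) ->
  - (b%:R * ln 2 + n%:R * c) <=
    lam * \sum_(xs : n.-tuple 'I_q)
            (\prod_(i < n) mu (tnth xs i)) * rmg_cost A alg xs (adv xs).
Proof.
move=> reads; rewrite lerNl.
under eq_bigr do rewrite (rmg_cost_tape_prefix _ (reads _)).
have -> : b%:R * ln 2 + n%:R * c = ln (#|{ffun 'I_b -> bool}|%:R * expR c ^+ n).
  rewrite card_ffun card_bool card_ord natrX lnM ?posrE ?exprn_gt0 ?expR_gt0 //.
  by rewrite !lnXn ?expR_gt0 ?ltr0n // expRK !mulr_natl.
apply: (selected_cost_mean_ge (C := fun s xs => rmg_cost A alg xs (tape_of s))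
                              (fun xs => tape_prefix b (adv xs))).
- by move=> xs; rewrite prodr_ge0.
- by rewrite sum_prod_tuple mu_sum1 expr1n.
- by move=> s; apply: (rmg_cost_expR_le (fun n l => alg n l (tape_of s))).
Qed.

End DeterministicAlgorithm.

Lemma le_integral_by_averaging (R : realType) (d : measure_display)
    (Omega : measurableType d) (P : probability Omega R) (I : finType)
    (p : I -> R) (F : Omega -> I -> R) (L C : R) :
  (forall i, 0 <= p i) -> \sum_i p i = 1 -> (forall w i, 0 <= F w i) ->
  (forall i, measurable_fun setT (F ^~ i)) ->
  (forall i, (\int[P]_w (F w i)%:E <= C%:E)%E) ->
  (forall w, L <= \sum_i p i * F w i) -> L <= C.
Proof.
move=> p_ge0 p_sum1 F_ge0 F_meas F_int L_le.
have pF_meas i : measurable_fun [set: Omega] (fun w => (p i * F w i)%:E).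
  exact/measurable_EFinP/measurable_funM.
apply: (@le_trans _ _ (Num.max L 0)); first by rewrite le_max lexx.
rewrite -lee_fin -[X in (X <= _)%E]mule1 -(probability_setT P) -integral_cst //.
apply: (@le_trans _ _ (\int[P]_w (\sum_i ((p i * F w i)%:E : \bar R)))%E).
  apply: ge0_le_integral => //.
  - by move=> w _; rewrite lee_fin le_max lexx orbT.
  - exact: emeasurable_sum.
  - move=> w _; rewrite sumEFin lee_fin ge_max L_le.
    by rewrite sumr_ge0 // => i _; rewrite mulr_ge0.
rewrite ge0_integral_sum // => [|i w _]; last by rewrite lee_fin mulr_ge0.
apply: (@le_trans _ _ (\sum_i ((p i)%:E * C%:E))%E).
  apply: lee_sum => i _; under eq_integral do rewrite EFinM.
  rewrite ge0_integralZl ?lee_wpmul2l ?lee_fin //.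
  - exact/measurable_EFinP.
  - by move=> w _; rewrite lee_fin.
under eq_bigr do rewrite -EFinM.
by rewrite sumEFin -mulr_suml p_sum1 mul1r.
Qed.

Section GameValue.
Variables (R : realType) (q : nat) (A : 'M[R]_q).
Hypothesis A_ge0 : forall x y, 0 <= A x y.

Lemma mat_maxnorm_ge x y : A x y <= mat_maxnorm A.
Proof.
apply: le_trans (le_bigmax _ _ x).
exact: le_bigmax (fun y => A x y) y.
Qed.

Lemma mixed_payoff_le_maxnorm (mu : 'I_q -> R) y : mixed_strategy mu ->
  \sum_x mu x * A x y <= mat_maxnorm A.
Proof.
case=> mu_ge0 mu_sum1; rewrite -[leRHS]mul1r -mu_sum1 mulr_suml.
by apply: ler_sum => x _; rewrite ler_wpM2l ?mat_maxnorm_ge.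
Qed.

Let pure (y : 'I_q) : 'I_q -> R := fun x => (x == y)%:R.

Lemma pure_mixed y : mixed_strategy (pure y).
Proof.
split=> [x|]; first by rewrite ler0n.
by rewrite (bigD1 y) //= /pure eqxx big1 ?addr0 // => x /negbTE ->.
Qed.

Lemma payoff_pure mu y : payoff A mu (pure y) = \sum_x mu x * A x y.
Proof.
apply: eq_bigr => x _; rewrite (bigD1 y) //= /pure eqxx mulr1 big1 ?addr0 //.
by move=> z /negbTE ->; rewrite mulr0 mul0r.
Qed.

Hypothesis q_gt0 : (0 < q)%N.

Lemma game_value_approx del : 0 < del -> exists2 mu, mixed_strategy mu &
  forall y, game_value A - del <= \sum_x mu x * A x y.
Proof.
move=> del_gt0.
pose guaranteed mu := [set payoff A mu nu | nu in @mixed_strategy R q].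
have guaranteed_lb mu : mixed_strategy mu -> has_lbound (guaranteed mu).
  case=> mu_ge0 _; exists 0 => _ [nu [nu_ge0 _] <-].
  by apply: sumr_ge0 => x _; apply: sumr_ge0 => y _; rewrite !mulr_ge0.
have inf_le mu y : mixed_strategy mu ->
    inf (guaranteed mu) <= \sum_x mu x * A x y.
  move=> mu_mixed; rewrite -payoff_pure.
  apply: (ge_inf (guaranteed_lb _ mu_mixed)).
  exact/(imageP _ (pure_mixed y)).
have values_sup : has_sup [set inf (guaranteed mu) | mu in @mixed_strategy R q].
  split; first by exists (inf (guaranteed (pure (Ordinal q_gt0))));
    apply/imageP/pure_mixed.
  exists (mat_maxnorm A) => _ [mu mu_mixed <-].
  apply: le_trans (inf_le mu (Ordinal q_gt0) mu_mixed) _.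
  exact: mixed_payoff_le_maxnorm.
have [_ [mu mu_mixed <-] close] := sup_adherent del_gt0 values_sup.
by exists mu => // y; apply: le_trans (ltW close) (inf_le _ _ mu_mixed).
Qed.

Lemma game_value_le_maxnorm : game_value A <= mat_maxnorm A.
Proof.
apply/ler_addgt0Pr => e /game_value_approx [mu mu_mixed close].
rewrite -lerBlDr; apply: le_trans (close (Ordinal q_gt0)) _.
exact: mixed_payoff_le_maxnorm.
Qed.

End GameValue.

Section RandomizedAlgorithm.
Variables (R : realType) (q : nat) (A : 'M[R]_q).
Hypothesis A_ge0 : forall x y, 0 <= A x y.
Variables (d : measure_display) (Omega : measurableType d).
Variable P : probability Omega R.
Variables (alg : Omega -> det_alg_adv q) (adv : Omega -> seq 'I_q -> nat -> bool).
Variables (n b : nat) (C : R).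
Hypothesis cost_meas : forall xs : n.-tuple 'I_q,
  measurable_fun setT (fun w => rmg_cost A (alg w) xs (adv w xs)).
Hypothesis cost_le : forall xs : n.-tuple 'I_q,
  (\int[P]_w (rmg_cost A (alg w) xs (adv w xs))%:E <= C%:E)%E.
Hypothesis reads : forall w (xs : n.-tuple 'I_q),
  reads_at_most (alg w) xs (adv w xs) b.

Let M := mat_maxnorm A.

Lemma randomized_mean_cost_ge (mu : 'I_q -> R) m0 lam : mixed_strategy mu ->
  (forall y, m0 <= \sum_x mu x * A x y) -> 0 < lam ->
  n%:R * (lam * m0 - lam ^+ 2 * M ^+ 2 / 2) - b%:R * ln 2 <= lam * C.
Proof.
case=> mu_ge0 mu_sum1 m0_le lam_gt0.
set c := - (lam * m0) + lam ^+ 2 * M ^+ 2 / 2.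
have mu_expR_le y : \sum_x mu x * expR (- (lam * A x y)) <= expR c.
  have A_bnd x : 0 <= A x y <= M by rewrite A_ge0 mat_maxnorm_ge.
  apply: le_trans (hoeffding_expR mu_ge0 mu_sum1 A_bnd (ltW lam_gt0)) _.
  by rewrite ler_expR /c lerD2r lerN2 ler_pM2l.
have -> : n%:R * (lam * m0 - lam ^+ 2 * M ^+ 2 / 2) - b%:R * ln 2 =
          - (b%:R * ln 2 + n%:R * c) by rewrite /c; ring.
rewrite [lam * C]mulrC -ler_pdivrMr //.
apply: (le_integral_by_averaging (P := P)
  (p := fun xs : n.-tuple 'I_q => \prod_(i < n) mu (tnth xs i))
  (F := fun w xs => rmg_cost A (alg w) xs (adv w xs))).
- by move=> xs; rewrite prodr_ge0.
- by rewrite sum_prod_tuple mu_sum1 expr1n.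
- by move=> w xs; rewrite sumr_ge0.
- exact: cost_meas.
- exact: cost_le.
- move=> w; rewrite ler_pdivrMr // [_ * lam]mulrC.
  exact: (det_advice_mean_cost_ge mu_ge0 mu_sum1 mu_expR_le (@reads w)).
Qed.

Hypothesis q_gt0 : (0 < q)%N.

Lemma randomized_mean_cost_ge_value lam : 0 < lam ->
  n%:R * (lam * game_value A - lam ^+ 2 * M ^+ 2 / 2) - b%:R * ln 2 <= lam * C.
Proof.
move=> lam_gt0; apply/ler_addgt0Pr => e e_gt0.
have del_gt0 : 0 < e / (lam * n.+1%:R) by rewrite divr_gt0 ?mulr_gt0.
have [mu mu_mixed close] := game_value_approx A_ge0 q_gt0 del_gt0.
have := randomized_mean_cost_ge mu_mixed close lam_gt0.
set del := e / _ in del_gt0 close *.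
have loss_le : n%:R * lam * del <= e.
  have -> : n%:R * lam * del = e * (n%:R / n.+1%:R).
    by rewrite /del; field; rewrite (gt_eqF lam_gt0) andbT addrC natr1 pnatr_eq0.
  by rewrite ger_pMr // ler_pdivrMr ?ltr0n // mul1r ler_nat.
lra.
Qed.

End RandomizedAlgorithm.

Theorem theorem3 (R : realType) (q : nat) (hq : (2 <= q)%N)
  (A : 'M[R]_q) (hA : forall x y, 0 <= A x y)
  (eps : R) (heps : 0 < eps) (hepsV : eps <= game_value A)
  (d : measure_display) (Omega : measurableType d) (P : probability Omega R)
  (alg : Omega -> det_alg_adv q) (adv : Omega -> seq 'I_q -> (nat -> bool))
  (n b : nat)
  (hmeas : forall xs : n.-tuple 'I_q,
     measurable_fun setT (fun w => rmg_cost A (alg w) xs (adv w xs)))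
  (hcost : forall xs : n.-tuple 'I_q,
     (\int[P]_w (rmg_cost A (alg w) xs (adv w xs))%:E
        <= ((game_value A - eps) * n%:R)%:E)%E)
  (hbits : forall w (xs : n.-tuple 'I_q), reads_at_most (alg w) xs (adv w xs) b) :
  eps ^+ 2 / (2 * ln 2 * mat_maxnorm A ^+ 2) * n%:R <= b%:R.
Proof.
have q_gt0 : (0 < q)%N := ltnW hq.
set V := game_value A in hepsV hcost *; set M := mat_maxnorm A.
have M_gt0 : 0 < M.
  exact: lt_le_trans heps (le_trans hepsV (game_value_le_maxnorm hA q_gt0)).
have ln2_gt0 : 0 < ln (2 : R) by rewrite ln_gt0 // ltr1n.
pose lam := eps / M ^+ 2.
have lam_gt0 : 0 < lam by rewrite divr_gt0 // exprn_gt0.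
have lamM : lam ^+ 2 * M ^+ 2 = lam * eps.
  by rewrite /lam; field; rewrite gt_eqF.
have := randomized_mean_cost_ge_value hA hmeas hcost hbits q_gt0 lam_gt0.
rewrite -/V -/M lamM => bound.
have -> : eps ^+ 2 / (2 * ln 2 * M ^+ 2) * n%:R = n%:R * lam * eps / 2 / ln 2.
  by rewrite /lam; field; rewrite !gt_eqF.
rewrite ler_pdivrMr //; lra.
Qed.
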